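(* Let $n\in\mathbb N$, let $f$ be extremal for $M_n$ with $f(0)=e^{-t}$, $t>0$, written as $f(z)=\exp\big(-\sum_{j=1}^N\lambda_j\frac{1+\alpha_jz}{1-\alpha_jz}\big)$, and let $g(z)=-\sum_{j=1}^N\lambda_j\frac{1+\alpha_jz}{1-\alpha_jz}$ (a rational function, so $f=e^g$). Then $g$ has exactly $N$ zeros $\beta_1,\dots,\beta_N$, all lying on $\partial\mathbb D$, and \[g(z)=t\,\frac{\prod_{j=1}^N(z-\beta_j)}{\prod_{j=1}^N(z-\overline{\alpha_j})}.\]
   Context: $\mathbb D$ is the open unit disc; $\mathcal B_0=\{f$ holomorphic on $\mathbb D: 0<|f|\le1\}$; $M_n(f)=\mathrm{Re}\,a_n$; $f\in\mathcal B_0$ is extremal for $M_n$ if $M_n(f)\ge M_n(F)$ for all $F\in\mathcal B_0$. It is known that an extremal $f$ with $f(0)>0$ has the displayed form with $1\le N\le n$, $\lambda_j>0$ and distinct $\alpha_j\in\partial\mathbb D$. *)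

From Stdlib Require Import Reals.
From Coquelicot Require Import Coquelicot.
Open Scope C_scope.

Definition cexp (z : C) : C :=
  (exp (Re z) * cos (Im z), exp (Re z) * sin (Im z))%R.

Fixpoint cpow (z : C) (k : nat) : C :=
  match k with O => RtoC 1 | S m => z * cpow z m end.

Fixpoint csum (F : nat -> C) (N : nat) : C :=
  match N with O => RtoC 0 | S m => csum F m + F m end.
Fixpoint cprod (F : nat -> C) (N : nat) : C :=
  match N with O => RtoC 1 | S m => cprod F m * F m end.

(* f is holomorphic on the unit disc D with Taylor coefficients a:
   f z = sum_k a_k z^k for every z in D *)
Definition taylor_on_disc (a : nat -> C) (f : C -> C) : Prop :=
  forall z : C, (Cmod z < 1)%R ->
    @is_series C_AbsRing C_NormedModule (fun k => a k * cpow z k) (f z).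

Definition B0 (f : C -> C) : Prop :=
  (exists a, taylor_on_disc a f) /\
  (forall z : C, (Cmod z < 1)%R -> (0 < Cmod (f z) <= 1)%R).

(* f is extremal for M_n (M_n(F) = Re a_n(F)) *)
Definition extremal (n : nat) (f : C -> C) : Prop :=
  B0 f /\
  forall a, taylor_on_disc a f ->
  forall (F : C -> C) (b : nat -> C), B0 F -> taylor_on_disc b F ->
    (Re (b n) <= Re (a n))%R.

Definition gfun (N : nat) (lam : nat -> R) (alpha : nat -> C) (z : C) : C :=
  - csum (fun j => RtoC (lam j) * ((RtoC 1 + alpha j * z) / (RtoC 1 - alpha j * z))) N.

(* On the unit circle each term (1 + alpha z) / (1 - alpha z) is purely imaginary: for
   z = conj(alpha_j) e^{is} it equals i cot((s - theta_m) / 2), where theta_m is the angle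
   from the pole conj(alpha_j) to the pole conj(alpha_m).  Hence, on the open arc from
   conj(alpha_j) to the next pole counterclockwise, -i g is a continuous real function
   tending to +oo at the start and to -oo at the end, and the intermediate value theorem
   gives a zero beta_j there.  The N arcs are disjoint, so the beta_j are distinct.
   Clearing denominators, g(z) prod_j (z - conj(alpha_j)) is a polynomial of degree N with
   leading coefficient sum_j lam_j = -g(0) = t; subtracting t prod_j (z - beta_j) leaves a
   polynomial of degree < N with the N roots beta_j, which therefore vanishes. *)

From Stdlib Require Import Reals Ranalysis5 Lra Lia IndefiniteDescription.
From Coquelicot Require Import Coquelicot.

Open Scope C_scope.

Lemma Cmult_integral (a b : C) : a * b = 0 -> a = 0 \/ b = 0.
Proof.
  intros E. destruct (Ceq_dec a 0) as [Ha|Ha]; auto.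
  destruct (Ceq_dec b 0) as [Hb|Hb]; auto.
  exfalso. exact (Cmult_neq_0 a b Ha Hb E).
Qed.

Lemma Cminus_eq0 (a b : C) : a - b = 0 <-> a = b.
Proof.
  split; intros E.
  - replace a with (a - b + b) by ring. rewrite E. ring.
  - rewrite E. ring.
Qed.

Lemma cprod_eq0 (F : nat -> C) N : cprod F N = 0 <-> exists j, (j < N)%nat /\ F j = 0.
Proof.
  induction N as [|N IH]; simpl; split.
  - intros E. injection E. lra.
  - intros [j [Hj _]]. lia.
  - intros E. destruct (Cmult_integral _ _ E) as [E'|E'].
    + destruct (proj1 IH E') as [j [Hj Fj]]. exists j. split; auto.
    + exists N. auto.
  - intros [j [Hj Fj]]. destruct (Nat.eq_dec j N) as [->|Hne].
    + rewrite Fj. ring.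
    + rewrite (proj2 IH) by (exists j; split; auto; lia). ring.
Qed.

Lemma Cmod_1_mul_conj (a : C) : Cmod a = 1%R -> a * Cconj a = 1.
Proof. intros H. rewrite <- Cmod2_conj, H. apply injective_projections; simpl; ring. Qed.

(** * Polynomial functions *)

Fixpoint is_poly (d : nat) (p : C -> C) : Prop :=
  match d with
  | O => exists c, forall z, p z = c
  | S d' => exists c q, is_poly d' q /\ forall z, p z = c + z * q z
  end.

Lemma is_poly_ext d p q : (forall z, p z = q z) -> is_poly d p -> is_poly d q.
Proof.
  destruct d as [|d]; simpl.
  - intros E [c Hc]. exists c. intros z. rewrite <- E. auto.
  - intros E [c [r [Hr Hp]]]. exists c, r. split; auto. intros z. rewrite <- E. auto.
Qed.

Lemma is_poly_S d p : is_poly d p -> is_poly (S d) p.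
Proof.
  revert p; induction d as [|d IH]; intros p Hp.
  - destruct Hp as [c Hc]. exists c, (fun _ => RtoC 0). split.
    + exists (RtoC 0); auto.
    + intros z. rewrite Hc. ring.
  - destruct Hp as [c [q [Hq Hp]]]. exists c, q. auto.
Qed.

Lemma is_poly_add d p q :
  is_poly d p -> is_poly d q -> is_poly d (fun z => p z + q z).
Proof.
  revert p q; induction d as [|d IH]; intros p q Hp Hq.
  - destruct Hp as [c Hc], Hq as [c' Hc']. exists (c + c'). intros z. rewrite Hc, Hc'. auto.
  - destruct Hp as [c [r [Hr Hp]]], Hq as [c' [r' [Hr' Hq]]].
    exists (c + c'), (fun z => r z + r' z). split; auto.
    intros z. rewrite Hp, Hq. ring.
Qed.

Lemma is_poly_scal d a p : is_poly d p -> is_poly d (fun z => a * p z).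
Proof.
  revert p; induction d as [|d IH]; intros p Hp.
  - destruct Hp as [c Hc]. exists (a * c). intros z. rewrite Hc. auto.
  - destruct Hp as [c [r [Hr Hp]]]. exists (a * c), (fun z => a * r z). split; auto.
    intros z. rewrite Hp. ring.
Qed.

Lemma is_poly_mul_lin d p a : is_poly d p -> is_poly (S d) (fun z => p z * (z - a)).
Proof.
  intros Hp.
  apply (is_poly_ext _ (fun z => (fun z => z * p z) z + (fun z => - a * p z) z)).
  { intros z. ring. }
  apply is_poly_add.
  - exists (RtoC 0), p. split; auto. intros z. ring.
  - apply is_poly_S, is_poly_scal, Hp.
Qed.

Lemma is_poly_factor d p b :
  is_poly (S d) p -> exists q, is_poly d q /\ forall z, p z = p b + (z - b) * q z.
Proof.
  revert p; induction d as [|d IH]; intros p Hp.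
  - destruct Hp as [c [q [[c' Hq] Hp]]]. exists q. split.
    + exists c'; auto.
    + intros z. rewrite !Hp, !Hq. ring.
  - destruct Hp as [c [r [Hr Hp]]].
    destruct (IH r Hr) as [q [Hq Er]].
    exists (fun z => r b + z * q z). split.
    + exists (r b), q. auto.
    + intros z. rewrite !Hp, (Er z). ring.
Qed.

Lemma is_poly_eq0 d p (b : nat -> C) : is_poly d p ->
  (forall i j, (i < S d)%nat -> (j < S d)%nat -> b i = b j -> i = j) ->
  (forall i, (i < S d)%nat -> p (b i) = 0) -> forall z, p z = 0.
Proof.
  revert p; induction d as [|d IH]; intros p Hp Hb Hroot.
  - destruct Hp as [c Hc]. intros z. rewrite Hc, <- (Hc (b O)). apply Hroot. lia.
  - destruct (is_poly_factor d p (b (S d)) Hp) as [q [Hq Ep]].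
    rewrite (Hroot (S d)) in Ep by lia.
    assert (Hq0 : forall z, q z = 0).
    { apply (IH q Hq).
      - intros i j Hi Hj. apply Hb; lia.
      - intros i Hi. specialize (Hroot i ltac:(lia)). rewrite Ep in Hroot.
        destruct (Cmult_integral (b i - b (S d)) (q (b i))) as [E|E]; auto.
        + rewrite <- Hroot. ring.
        + apply Cminus_eq0, Hb in E; lia. }
    intros z. rewrite Ep, Hq0. ring.
Qed.

Lemma is_poly_cprod (u : nat -> C) N : is_poly N (fun z => cprod (fun j => z - u j) N).
Proof.
  induction N as [|N IH]; simpl.
  - exists (RtoC 1); auto.
  - exact (is_poly_mul_lin _ _ _ IH).
Qed.

Lemma is_poly_cprod_sub (u v : nat -> C) N :
  is_poly N (fun z => cprod (fun j => z - u j) (S N) - cprod (fun j => z - v j) (S N)).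
Proof.
  induction N as [|N IH].
  - exists (v O - u O). intros z. simpl. ring.
  - apply (is_poly_ext _ (fun z =>
      (fun z => (cprod (fun j => z - u j) (S N) - cprod (fun j => z - v j) (S N))
                * (z - u (S N))) z
      + (fun z => (v (S N) - u (S N)) * cprod (fun j => z - v j) (S N)) z)).
    { intros z. simpl. ring. }
    apply is_poly_add.
    + apply is_poly_mul_lin, IH.
    + apply is_poly_scal, is_poly_cprod.
Qed.

(** * Clearing the denominators of [gfun] *)

Lemma cayley_mul_pole (a z : C) : Cmod a = 1%R -> z <> Cconj a ->
  (1 + a * z) / (1 - a * z) * (z - Cconj a) = - (z + Cconj a).
Proof.
  intros Ha Hz. pose proof (Cmod_1_mul_conj a Ha) as Haa.
  assert (Ha0 : a <> 0) by (intros E; rewrite E in Haa; injection Haa; lra).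
  assert (Hz0 : z - Cconj a <> 0) by (intros E; apply Hz, Cminus_eq0, E).
  replace (1 + a * z) with (a * (z + Cconj a)) by (rewrite <- Haa; ring).
  replace (1 - a * z) with (- a * (z - Cconj a)) by (rewrite <- Haa; ring).
  field. auto.
Qed.

Fixpoint gfun_num (lam : nat -> R) (alpha : nat -> C) (N : nat) (z : C) : C :=
  match N with
  | O => 0
  | S m => gfun_num lam alpha m z * (z - Cconj (alpha m))
           + RtoC (lam m) * (z + Cconj (alpha m)) * cprod (fun j => z - Cconj (alpha j)) m
  end.

Lemma gfun_mul_cprod N lam alpha z :
  (forall j, (j < N)%nat -> Cmod (alpha j) = 1%R) ->
  (forall j, (j < N)%nat -> z <> Cconj (alpha j)) ->
  gfun N lam alpha z * cprod (fun j => z - Cconj (alpha j)) N = gfun_num lam alpha N z.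
Proof.
  induction N as [|N IH]; intros Ha Hz.
  - unfold gfun. simpl. ring.
  - simpl. rewrite <- IH by auto. unfold gfun. simpl.
    set (P := cprod (fun j => z - Cconj (alpha j)) N).
    set (S := csum _ N).
    transitivity (- S * P * (z - Cconj (alpha N)) - RtoC (lam N) * P *
      ((1 + alpha N * z) / (1 - alpha N * z) * (z - Cconj (alpha N)))).
    { ring. }
    rewrite cayley_mul_pole by auto. ring.
Qed.

Lemma gfun_num_sub_lead lam alpha N :
  is_poly N (fun z => gfun_num lam alpha (S N) z
    - csum (fun j => RtoC (lam j)) (S N) * cprod (fun j => z - Cconj (alpha j)) (S N)).
Proof.
  induction N as [|N IH].
  - exists (2 * RtoC (lam O) * Cconj (alpha O)). intros z. simpl. ring.
  - apply (is_poly_ext _ (fun z =>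
      (fun z => (gfun_num lam alpha (S N) z
         - csum (fun j => RtoC (lam j)) (S N) * cprod (fun j => z - Cconj (alpha j)) (S N))
         * (z - Cconj (alpha (S N)))) z
      + (fun z => 2 * RtoC (lam (S N)) * Cconj (alpha (S N))
                  * cprod (fun j => z - Cconj (alpha j)) (S N)) z)).
    { intros z. change (gfun_num lam alpha (S (S N)) z) with
        (gfun_num lam alpha (S N) z * (z - Cconj (alpha (S N)))
         + RtoC (lam (S N)) * (z + Cconj (alpha (S N)))
           * cprod (fun j => z - Cconj (alpha j)) (S N)).
      simpl. ring. }
    apply is_poly_add.
    + apply is_poly_mul_lin, IH.
    + apply is_poly_scal, is_poly_cprod.
Qed.

Lemma gfun_factor N lam alpha (beta : nat -> C) :
  (forall j, (j < N)%nat -> Cmod (alpha j) = 1%R) ->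
  (forall i j, (i < N)%nat -> (j < N)%nat -> beta i = beta j -> i = j) ->
  (forall j k, (j < N)%nat -> (k < N)%nat -> beta j <> Cconj (alpha k)) ->
  (forall j, (j < N)%nat -> gfun N lam alpha (beta j) = 0) ->
  forall z, (forall k, (k < N)%nat -> z <> Cconj (alpha k)) ->
  gfun N lam alpha z * cprod (fun j => z - Cconj (alpha j)) N
  = csum (fun j => RtoC (lam j)) N * cprod (fun j => z - beta j) N.
Proof.
  intros Ha Hb Hpole Hzero z Hz. rewrite gfun_mul_cprod by auto.
  destruct N as [|N]; [simpl; ring|].
  set (c := csum (fun j => RtoC (lam j)) (S N)).
  assert (Hdeg : is_poly N (fun z =>
            gfun_num lam alpha (S N) z - c * cprod (fun j => z - beta j) (S N))).
  { apply (is_poly_ext _ (fun z =>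
      (fun z => gfun_num lam alpha (S N) z - c * cprod (fun j => z - Cconj (alpha j)) (S N)) z
      + (fun z => - c * (cprod (fun j => z - beta j) (S N)
                         - cprod (fun j => z - Cconj (alpha j)) (S N))) z)).
    { intros w. ring. }
    apply is_poly_add.
    - apply gfun_num_sub_lead.
    - apply is_poly_scal, is_poly_cprod_sub. }
  apply Cminus_eq0, (is_poly_eq0 N _ beta Hdeg Hb).
  intros i Hi. rewrite <- gfun_mul_cprod, Hzero by auto.
  rewrite (proj2 (cprod_eq0 (fun j => beta i - beta j) (S N))).
  - ring.
  - exists i. split; auto. ring.
Qed.

Lemma gfun_0 N lam alpha : gfun N lam alpha 0 = - csum (fun j => RtoC (lam j)) N.
Proof.
  unfold gfun. f_equal.
  induction N as [|N IH]; simpl; auto.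
  rewrite IH. f_equal. rewrite Cmult_0_r. field.
Qed.

Open Scope R_scope.

Fixpoint rsum (F : nat -> R) (N : nat) : R :=
  match N with O => 0 | S m => rsum F m + F m end.

Lemma csum_RtoC (a : nat -> R) N : csum (fun j => RtoC (a j)) N = RtoC (rsum a N).
Proof.
  induction N as [|N IH]; simpl; auto.
  rewrite IH. apply injective_projections; simpl; ring.
Qed.

Lemma rsum_continuity_pt (T : nat -> R -> R) N x :
  (forall m, (m < N)%nat -> continuity_pt (T m) x) ->
  continuity_pt (fun s => rsum (fun m => T m s) N) x.
Proof.
  induction N as [|N IH]; intros H; simpl.
  - apply continuity_pt_const. intros ? ?. auto.
  - apply (continuity_pt_plus (fun s => rsum (fun m => T m s) N) (T N)); auto.
Qed.

Section FilterSums.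

Context {F : (R -> Prop) -> Prop} {FF : Filter F}.

Lemma filter_rsum_bounded_below (T : nat -> R -> R) N :
  (forall m, (m < N)%nat -> exists L, F (fun s => L < T m s)) ->
  exists L, F (fun s => L < rsum (fun m => T m s) N).
Proof.
  induction N as [|N IH]; intros H.
  - exists (-1). apply filter_forall. simpl. intros. lra.
  - destruct IH as [L1 H1]; [intros m Hm; apply H; lia|].
    destruct (H N ltac:(lia)) as [L2 H2]. exists (L1 + L2).
    apply (filter_imp _ _ (fun s Hs => Rplus_lt_compat _ _ _ _ (proj1 Hs) (proj2 Hs))).
    apply filter_and; auto.
Qed.

Lemma filter_rsum_unbounded (T : nat -> R -> R) N m0 :
  (forall m, (m < N)%nat -> exists L, F (fun s => L < T m s)) ->
  (m0 < N)%nat -> (forall M, F (fun s => M < T m0 s)) ->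
  forall M, F (fun s => M < rsum (fun m => T m s) N).
Proof.
  induction N as [|N IH]; intros H Hm0 Hinf M; [lia|]. simpl.
  destruct (Nat.eq_dec m0 N) as [->|Hne].
  - destruct (filter_rsum_bounded_below T N) as [L HL]; [intros m Hm; apply H; lia|].
    apply (filter_imp (fun s => L < rsum (fun m => T m s) N /\ M - L < T N s)).
    + intros s [A B]. lra.
    + apply filter_and; auto.
  - destruct (H N ltac:(lia)) as [L HL].
    apply (filter_imp (fun s => M - L < rsum (fun m => T m s) N /\ L < T N s)).
    + intros s [A B]. lra.
    + apply filter_and; auto. apply IH; [intros m Hm; apply H | |]; auto; lia.
Qed.

End FilterSums.

Lemma continuity_pt_locally_gt f x :
  continuity_pt f x -> locally x (fun s => f x - 1 < f s).
Proof.
  intros Hf. apply continuity_pt_filterlim in Hf. apply Hf.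
  exists (mkposreal 1 Rlt_0_1). intros y Hy.
  apply Rabs_def2 in Hy. simpl in Hy. unfold minus, plus, opp in Hy. simpl in Hy. lra.
Qed.

Lemma at_right_intro p d (P : R -> Prop) :
  0 < d -> (forall s, p < s < p + d -> P s) -> at_right p P.
Proof.
  intros Hd H. exists (mkposreal d Hd). intros s Hs Hps.
  apply Rabs_def2 in Hs. simpl in Hs. unfold minus, plus, opp in Hs. simpl in Hs.
  apply H. lra.
Qed.

Lemma at_left_intro p d (P : R -> Prop) :
  0 < d -> (forall s, p - d < s < p -> P s) -> at_left p P.
Proof.
  intros Hd H. exists (mkposreal d Hd). intros s Hs Hps.
  apply Rabs_def2 in Hs. simpl in Hs. unfold minus, plus, opp in Hs. simpl in Hs.
  apply H. lra.
Qed.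

Lemma at_right_pick p q (P : R -> Prop) :
  p < q -> at_right p P -> exists s, p < s < q /\ P s.
Proof.
  intros Hpq [d Hd]. set (s := p + Rmin d (q - p) / 2).
  assert (0 < Rmin d (q - p)) by (apply Rmin_glb_lt; [apply cond_pos|lra]).
  pose proof (Rmin_r d (q - p)). pose proof (Rmin_l d (q - p)).
  exists s. unfold s. split; [lra|]. apply Hd; [|lra].
  apply Rabs_def1; simpl; unfold minus, plus, opp; simpl; lra.
Qed.

Lemma at_left_pick p q (P : R -> Prop) :
  q < p -> at_left p P -> exists s, q < s < p /\ P s.
Proof.
  intros Hpq [d Hd]. set (s := p - Rmin d (p - q) / 2).
  assert (0 < Rmin d (p - q)) by (apply Rmin_glb_lt; [apply cond_pos|lra]).
  pose proof (Rmin_r d (p - q)). pose proof (Rmin_l d (p - q)).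
  exists s. unfold s. split; [lra|]. apply Hd; [|lra].
  apply Rabs_def1; simpl; unfold minus, plus, opp; simpl; lra.
Qed.

(** * [cot (x / 2)] near its poles *)

(* [cot_half x = cot (x / 2)], and [(1 + e^{ix}) / (1 - e^{ix}) = i cot_half x]. *)
Definition cot_half (x : R) : R := sin x / (1 - cos x).

Lemma cos_eq_1_2PI u : - (2 * PI) < u < 2 * PI -> cos u = 1 -> u = 0.
Proof.
  intros Hu Hc. pose proof PI_RGT_0.
  assert (Hs : sin u = 0) by (pose proof (sin2_cos2 u); rewrite Hc in *; unfold Rsqr in *; nra).
  destruct (Rle_dec 0 u).
  - destruct (sin_eq_O_2PI_0 u) as [E|[E|E]]; try lra.
    subst. rewrite cos_PI in Hc. lra.
  - destruct (sin_eq_O_2PI_0 (- u)) as [E|[E|E]]; try lra.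
    + rewrite sin_neg, Hs. lra.
    + replace u with (- PI) in Hc by lra. rewrite cos_neg, cos_PI in Hc. lra.
Qed.

Lemma cot_half_shift s c p : cos (p - c) = 1 -> cot_half (s - c) = cot_half (s - p).
Proof.
  intros Hc.
  assert (Hs : sin (p - c) = 0)
    by (pose proof (sin2_cos2 (p - c)); rewrite Hc in *; unfold Rsqr in *; nra).
  unfold cot_half. replace (s - c) with (s - p + (p - c)) by ring.
  rewrite sin_plus, cos_plus, Hc, Hs. f_equal; ring.
Qed.

Lemma cot_half_opp x : cot_half (- x) = - cot_half x.
Proof. unfold cot_half. rewrite sin_neg, cos_neg. unfold Rdiv. ring. Qed.

Lemma continuity_pt_cot_half_sub c x :
  cos (x - c) <> 1 -> continuity_pt (fun s => cot_half (s - c)) x.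
Proof.
  intros Hc.
  assert (Hsub : continuity_pt (fun s => s - c) x).
  { apply (continuity_pt_minus (fun s => s) (fun _ => c)).
    - apply derivable_continuous_pt, derivable_pt_id.
    - apply continuity_pt_const. intros ? ?. auto. }
  apply (continuity_pt_div (fun s => sin (s - c)) (fun s => 1 - cos (s - c))).
  - exact (continuity_pt_comp _ sin x Hsub (continuity_sin _)).
  - apply (continuity_pt_minus (fun _ => 1) (fun s => cos (s - c))).
    + apply continuity_pt_const. intros ? ?. auto.
    + exact (continuity_pt_comp _ cos x Hsub (continuity_cos _)).
  - lra.
Qed.

Lemma cot_half_large_near_0 M : exists d, 0 < d /\ forall x, 0 < x < d -> M < cot_half x.
Proof.
  pose proof PI_RGT_0. pose proof (Rabs_pos M).
  exists (Rmin (PI / 2) (/ (Rabs M + 1))). split.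
  { apply Rmin_glb_lt; [lra|]. apply Rinv_0_lt_compat. lra. }
  intros x [Hx0 Hxd].
  assert (Hx1 : x < PI / 2) by (eapply Rlt_le_trans; [exact Hxd|apply Rmin_l]).
  assert (Hx2 : x < / (Rabs M + 1)) by (eapply Rlt_le_trans; [exact Hxd|apply Rmin_r]).
  assert (Hsin : 0 < sin x) by (apply sin_gt_0; lra).
  assert (Hcos : 0 < cos x) by (apply cos_gt_0; lra).
  assert (Hsx : sin x < x) by (apply sin_lt_x; lra).
  assert (Hc1 : cos x < 1).
  { destruct (Req_dec (cos x) 1) as [E|E].
    - apply cos_eq_1_2PI in E; lra.
    - pose proof (COS_bound x). lra. }
  (* [M (1 - cos x) <= |M| sin x ^ 2 < sin x], since [1 - cos x = sin x ^ 2 / (1 + cos x)]. *)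
  assert (HM : (Rabs M + 1) * sin x < 1).
  { apply Rmult_lt_compat_l with (r := Rabs M + 1) in Hx2; [|lra].
    rewrite Rinv_r in Hx2 by lra. nra. }
  pose proof (sin2_cos2 x) as E. unfold Rsqr in E.
  pose proof (Rle_abs M).
  unfold cot_half. apply Rlt_div_r; [lra|]. nra.
Qed.

Lemma cot_half_at_right p M : at_right p (fun s => M < cot_half (s - p)).
Proof.
  destruct (cot_half_large_near_0 M) as [d [Hd H]].
  apply (at_right_intro p d); auto. intros s Hs. apply H. lra.
Qed.

Lemma cot_half_at_left p M : at_left p (fun s => cot_half (s - p) < M).
Proof.
  destruct (cot_half_large_near_0 (- M)) as [d [Hd H]].
  apply (at_left_intro p d); auto. intros s Hs.
  specialize (H (p - s) ltac:(lra)).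
  replace (p - s) with (- (s - p)) in H by ring. rewrite cot_half_opp in H. lra.
Qed.

Lemma cot_half_term_bounded_right p c l : 0 <= l ->
  exists L, at_right p (fun s => L < l * cot_half (s - c)).
Proof.
  intros Hl. destruct (Req_dec (cos (p - c)) 1) as [Hc|Hc].
  - exists (-1). apply (filter_imp (fun s => 0 < cot_half (s - p))); [|apply cot_half_at_right].
    intros s Hs. rewrite (cot_half_shift s c p Hc). nra.
  - pose proof (continuity_pt_locally_gt _ _
      (continuity_pt_scal _ l _ (continuity_pt_cot_half_sub c p Hc))) as HL.
    eexists. apply filter_le_within. exact HL.
Qed.

Lemma cot_half_term_bounded_left p c l : 0 <= l ->
  exists L, at_left p (fun s => L < - (l * cot_half (s - c))).
Proof.
  intros Hl. destruct (Req_dec (cos (p - c)) 1) as [Hc|Hc].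
  - exists (-1). apply (filter_imp (fun s => cot_half (s - p) < 0)); [|apply cot_half_at_left].
    intros s Hs. rewrite (cot_half_shift s c p Hc). nra.
  - pose proof (continuity_pt_locally_gt _ _ (continuity_pt_opp _ _
      (continuity_pt_scal _ l _ (continuity_pt_cot_half_sub c p Hc)))) as HL.
    eexists. apply filter_le_within. exact HL.
Qed.

Lemma cot_half_term_unbounded_right p c l : 0 < l -> cos (p - c) = 1 ->
  forall M, at_right p (fun s => M < l * cot_half (s - c)).
Proof.
  intros Hl Hc M. apply (filter_imp (fun s => M / l < cot_half (s - p))).
  - intros s Hs. rewrite (cot_half_shift s c p Hc).
    apply Rmult_lt_compat_l with (r := l) in Hs; auto.
    replace (l * (M / l)) with M in Hs by (field; lra). exact Hs.
  - apply cot_half_at_right.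
Qed.

Lemma cot_half_term_unbounded_left p c l : 0 < l -> cos (p - c) = 1 ->
  forall M, at_left p (fun s => M < - (l * cot_half (s - c))).
Proof.
  intros Hl Hc M. apply (filter_imp (fun s => cot_half (s - p) < - M / l)).
  - intros s Hs. rewrite (cot_half_shift s c p Hc).
    apply Rmult_lt_compat_l with (r := l) in Hs; auto.
    replace (l * (- M / l)) with (- M) in Hs by (field; lra). lra.
  - apply cot_half_at_left.
Qed.

Lemma rsum_opp (F : nat -> R) N : rsum (fun m => - F m) N = - rsum F N.
Proof. induction N as [|N IH]; simpl; [ring|]. rewrite IH. ring. Qed.

Section RootBetweenPoles.

Variables (lam e : nat -> R) (N j : nat) (d : R).
Hypothesis Hj : (j < N)%nat.
Hypothesis Hlam : forall m, (m < N)%nat -> 0 < lam m.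
Hypothesis Hej : e j = 0.
Hypothesis He : forall m, (m < N)%nat -> m <> j -> d <= e m < 2 * PI.
Hypothesis Hd : 0 < d <= 2 * PI.
Hypothesis Hpole_d : exists m0, (m0 < N)%nat /\ cos (d - e m0) = 1.

Let T m s := lam m * cot_half (s - e m).

Lemma no_pole_between s m : (m < N)%nat -> 0 < s < d -> cos (s - e m) <> 1.
Proof.
  intros Hm Hs Hc. pose proof PI_RGT_0.
  destruct (Nat.eq_dec m j) as [->|Hmj].
  - apply cos_eq_1_2PI in Hc; lra.
  - specialize (He m Hm Hmj). apply cos_eq_1_2PI in Hc; lra.
Qed.

Lemma rsum_cot_half_at_right : at_right 0 (fun s => 0 < rsum (fun m => T m s) N).
Proof.
  apply (filter_rsum_unbounded T N j); auto.
  - intros m Hm. apply cot_half_term_bounded_right. specialize (Hlam m Hm). lra.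
  - apply cot_half_term_unbounded_right; auto. rewrite Hej, Rminus_0_r. apply cos_0.
Qed.

Lemma rsum_cot_half_at_left : at_left d (fun s => rsum (fun m => T m s) N < 0).
Proof.
  destruct Hpole_d as [m0 [Hm0 Hc0]].
  apply (filter_imp (fun s => 0 < rsum (fun m => - T m s) N)).
  { intros s Hs. rewrite rsum_opp in Hs. lra. }
  apply (filter_rsum_unbounded (fun m s => - T m s) N m0); auto.
  - intros m Hm. apply cot_half_term_bounded_left. specialize (Hlam m Hm). lra.
  - apply cot_half_term_unbounded_left; auto.
Qed.

Lemma rsum_cot_half_root : exists s, 0 < s < d /\ rsum (fun m => T m s) N = 0.
Proof.
  destruct (at_right_pick 0 (d / 2) _ ltac:(lra) rsum_cot_half_at_right) as [a [Ha Ga]].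
  destruct (at_left_pick d (d / 2) _ ltac:(lra) rsum_cot_half_at_left) as [b [Hb Gb]].
  destruct (IVT_interv (fun s => - rsum (fun m => T m s) N) a b) as [s [Hs Gs]]; [|lra ..|].
  - intros x Hx. apply continuity_pt_opp, rsum_continuity_pt.
    intros m Hm. apply continuity_pt_scal, continuity_pt_cot_half_sub, no_pole_between; auto; lra.
  - exists s. split; lra.
Qed.

End RootBetweenPoles.

(** * Roots of [gfun] on the unit circle *)

Open Scope C_scope.

Definition cis (x : R) : C := (cos x, sin x).

(* The argument in [[0, 2 PI)] of a unit complex number. *)
Definition ang (w : C) : R :=
  if Rle_dec 0 (Im w) then acos (Re w) else (2 * PI - acos (Re w))%R.

Lemma cis_add a b : cis a * cis b = cis (a + b).
Proof.
  unfold cis, Cmult. simpl. rewrite cos_plus, sin_plus.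
  apply injective_projections; simpl; ring.
Qed.

Lemma Cconj_cis a : Cconj (cis a) = cis (- a).
Proof. unfold cis, Cconj. simpl. rewrite cos_neg, sin_neg. reflexivity. Qed.

Lemma Cmod_cis a : Cmod (cis a) = 1%R.
Proof.
  unfold cis, Cmod. simpl. pose proof (sin2_cos2 a) as E. unfold Rsqr in E.
  replace (_ + _)%R with 1%R by lra. apply sqrt_1.
Qed.

Lemma cis_ang w : Cmod w = 1%R -> (0 <= ang w < 2 * PI)%R /\ cis (ang w) = w.
Proof.
  intros Hw. pose proof PI_RGT_0.
  pose proof (Cmod2_conj w) as Hw2. rewrite Hw in Hw2.
  destruct w as [x y]. apply (f_equal fst) in Hw2. simpl in Hw2.
  assert (Hx : (-1 <= x <= 1)%R) by nra.
  pose proof (acos_bound x) as Hb.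
  pose proof (cos_acos x Hx) as Hc. pose proof (sin_acos x Hx) as Hs.
  assert (Hsq : sqrt (1 - x²) = Rabs y).
  { replace (1 - x²)%R with (y * y)%R by (unfold Rsqr; lra). apply sqrt_Rsqr_abs. }
  unfold ang, cis. simpl. destruct (Rle_dec 0 y).
  - split; [lra|]. rewrite Hc, Hs, Hsq, Rabs_right by lra. reflexivity.
  - split.
    + assert (acos x <> 0%R) by (intros E; rewrite E, cos_0 in Hc; subst x; nra). lra.
    + rewrite cos_minus, sin_minus, cos_2PI, sin_2PI, Hc, Hs, Hsq, Rabs_left by lra.
      apply injective_projections; simpl; ring.
Qed.

Lemma cis_inj_cos a b : cis a = cis b -> cos (a - b) = 1%R.
Proof.
  intros E.
  assert (E' : cis (a - b) = 1).
  { unfold Rminus. rewrite <- cis_add, E, <- Cconj_cis. apply Cmod_1_mul_conj, Cmod_cis. }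
  apply (f_equal fst) in E'. exact E'.
Qed.

Lemma cayley_cis x : cos x <> 1%R -> (1 + cis x) / (1 - cis x) = (0%R, cot_half x).
Proof.
  intros Hx.
  assert (Hne : 1 - cis x <> 0) by (intros E; injection E; intros; lra).
  assert (E : 1 + cis x = (1 - cis x) * (0%R, cot_half x)).
  { unfold cis, cot_half, Cmult, Cminus, Cplus, Copp. simpl.
    pose proof (sin2_cos2 x) as S. unfold Rsqr in S.
    assert (Hc : (1 - cos x <> 0)%R) by lra.
    apply injective_projections; simpl.
    - apply Rmult_eq_reg_r with (1 - cos x)%R; auto. field_simplify; auto. nra.
    - field. auto. }
  rewrite E. field. auto.
Qed.

Lemma csum_cayley_cis (lam x : nat -> R) (w : nat -> C) K :
  (forall m, (m < K)%nat -> w m = cis (x m) /\ cos (x m) <> 1%R) ->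
  csum (fun m => RtoC (lam m) * ((1 + w m) / (1 - w m))) K
  = (0%R, rsum (fun m => lam m * cot_half (x m))%R K).
Proof.
  induction K as [|K IH]; intros H; simpl; [reflexivity|].
  destruct (H K ltac:(lia)) as [-> Hc].
  rewrite IH, cayley_cis by (auto; intros m Hm; apply H; lia).
  apply injective_projections; simpl; ring.
Qed.

Fixpoint next_pole (e : nat -> R) (j N : nat) : R :=
  match N with
  | O => (2 * PI)%R
  | S m => if Nat.eq_dec m j then next_pole e j m else Rmin (next_pole e j m) (e m)
  end.

Lemma next_pole_spec (e : nat -> R) j N :
  (forall m, (m < N)%nat -> m <> j -> (0 < e m)%R) ->
  (0 < next_pole e j N <= 2 * PI)%R /\
  (forall m, (m < N)%nat -> m <> j -> (next_pole e j N <= e m)%R) /\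
  (next_pole e j N = (2 * PI)%R \/
   exists m, (m < N)%nat /\ m <> j /\ next_pole e j N = e m).
Proof.
  pose proof PI_RGT_0.
  induction N as [|N IH]; intros He; simpl.
  - split; [lra|]. split; [intros; lia|]. auto.
  - destruct IH as [A [B C]]; [intros; apply He; auto; lia|].
    destruct (Nat.eq_dec N j) as [->|Hne].
    + split; auto. split; [intros m Hm Hmj; apply B; lia|].
      destruct C as [C|[m [Hm [Hmj C]]]]; auto. right. exists m. split; [lia|auto].
    + pose proof (Rmin_l (next_pole e j N) (e N)). pose proof (Rmin_r (next_pole e j N) (e N)).
      split; [split; [apply Rmin_glb_lt; [lra|apply He; auto]|lra]|].
      split.
      * intros m Hm Hmj. destruct (Nat.eq_dec m N) as [->|]; auto.
        specialize (B m ltac:(lia) Hmj). lra.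
      * unfold Rmin. destruct (Rle_dec (next_pole e j N) (e N)).
        -- destruct C as [C|[m [Hm [Hmj C]]]]; auto. right. exists m. split; [lia|auto].
        -- right. exists N. auto.
Qed.

(* The counterclockwise angle from the pole [Cconj (alpha j)] to the pole [Cconj (alpha m)]. *)
Definition rel_ang (alpha : nat -> C) (j m : nat) : R := ang (alpha j * Cconj (alpha m)).

Section RootsOnCircle.

Variables (N : nat) (lam : nat -> R) (alpha : nat -> C).
Hypothesis Hlam : forall j, (j < N)%nat -> (0 < lam j)%R.
Hypothesis Ha : forall j, (j < N)%nat -> Cmod (alpha j) = 1%R.
Hypothesis Hinj : forall i j, (i < N)%nat -> (j < N)%nat -> alpha i = alpha j -> i = j.

Lemma rel_ang_spec j m : (j < N)%nat -> (m < N)%nat ->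
  (0 <= rel_ang alpha j m < 2 * PI)%R /\ cis (rel_ang alpha j m) = alpha j * Cconj (alpha m).
Proof.
  intros Hj Hm. apply cis_ang. rewrite Cmod_mult, Cmod_conj, Ha, Ha by auto. ring.
Qed.

Lemma rel_ang_diag j : (j < N)%nat -> rel_ang alpha j j = 0%R.
Proof.
  intros Hj. unfold rel_ang, ang. rewrite Cmod_1_mul_conj by auto. simpl.
  destruct (Rle_dec 0 0); [apply acos_1|lra].
Qed.

Lemma rel_ang_pos j m : (j < N)%nat -> (m < N)%nat -> j <> m -> (0 < rel_ang alpha j m)%R.
Proof.
  intros Hj Hm Hjm. destruct (rel_ang_spec j m Hj Hm) as [B E].
  destruct (Req_dec (rel_ang alpha j m) 0) as [E0|]; [|lra].
  exfalso. apply Hjm, Hinj; auto.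
  rewrite E0 in E. unfold cis in E. rewrite cos_0, sin_0 in E.
  change (RtoC 1 = alpha j * Cconj (alpha m)) in E.
  transitivity (alpha j * Cconj (alpha m) * alpha m).
  - rewrite <- Cmult_assoc, (Cmult_comm (Cconj _)), Cmod_1_mul_conj by auto. ring.
  - rewrite <- E. ring.
Qed.

Lemma rel_ang_add j m : (j < N)%nat -> (m < N)%nat -> j <> m ->
  (rel_ang alpha j m + rel_ang alpha m j = 2 * PI)%R.
Proof.
  intros Hj Hm Hjm.
  destruct (rel_ang_spec j m Hj Hm) as [B1 E1], (rel_ang_spec m j Hm Hj) as [B2 E2].
  pose proof (rel_ang_pos j m Hj Hm Hjm).
  assert (E : cis (rel_ang alpha j m + rel_ang alpha m j) = cis (2 * PI)).
  { replace (cis (2 * PI)) with (RtoC 1) by (unfold cis; rewrite cos_2PI, sin_2PI; auto).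
    rewrite <- cis_add, E1, E2.
    transitivity ((alpha j * Cconj (alpha j)) * (alpha m * Cconj (alpha m))); [ring|].
    rewrite !Cmod_1_mul_conj by auto. ring. }
  apply cis_inj_cos, cos_eq_1_2PI in E; lra.
Qed.

Lemma mul_conj_cis j m s : (j < N)%nat -> (m < N)%nat ->
  alpha m * (Cconj (alpha j) * cis s) = cis (s - rel_ang alpha j m).
Proof.
  intros Hj Hm. destruct (rel_ang_spec j m Hj Hm) as [_ E].
  unfold Rminus. rewrite <- cis_add, <- Cconj_cis, E, Cmult_conj, Cconj_conj. ring.
Qed.

Lemma gfun_on_circle j s : (j < N)%nat ->
  (forall m, (m < N)%nat -> cos (s - rel_ang alpha j m) <> 1%R) ->
  gfun N lam alpha (Cconj (alpha j) * cis s)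
  = (0, - rsum (fun m => lam m * cot_half (s - rel_ang alpha j m)) N)%R.
Proof.
  intros Hj Hc. unfold gfun.
  rewrite (csum_cayley_cis lam (fun m => s - rel_ang alpha j m)%R).
  - apply injective_projections; simpl; ring.
  - intros m Hm. split; auto. apply mul_conj_cis; auto.
Qed.

Definition in_arc (j : nat) (s : R) : Prop :=
  (0 < s < 2 * PI)%R /\ forall m, (m < N)%nat -> m <> j -> (s < rel_ang alpha j m)%R.

Lemma cos_in_arc_ne_1 j k s : (j < N)%nat -> (k < N)%nat -> in_arc j s ->
  cos (s - rel_ang alpha j k) <> 1%R.
Proof.
  intros Hj Hk [Hs Hm] Hc. apply cos_eq_1_2PI in Hc.
  - destruct (Nat.eq_dec k j) as [->|Hkj].
    + rewrite rel_ang_diag in Hc by auto. lra.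
    + specialize (Hm k Hk Hkj). lra.
  - destruct (rel_ang_spec j k Hj Hk) as [B _]. lra.
Qed.

Lemma gfun_root_on_arc j : (j < N)%nat ->
  exists s, in_arc j s /\ gfun N lam alpha (Cconj (alpha j) * cis s) = 0.
Proof.
  intros Hj. pose proof PI_RGT_0.
  set (e := rel_ang alpha j).
  assert (He : forall m, (m < N)%nat -> m <> j -> (0 < e m < 2 * PI)%R).
  { intros m Hm Hmj. split; [apply rel_ang_pos; auto|apply rel_ang_spec; auto]. }
  destruct (next_pole_spec e j N) as [D1 [D2 D3]]; [intros; apply He; auto|].
  destruct (rsum_cot_half_root lam e N j (next_pole e j N)) as [s [Hs Hroot]]; auto.
  - apply rel_ang_diag; auto.
  - intros m Hm Hmj. split; [apply D2|apply He]; auto.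
  - destruct D3 as [D3|[m [Hm [_ D3]]]].
    + exists j. split; auto. rewrite D3. unfold e. rewrite rel_ang_diag, Rminus_0_r by auto.
      apply cos_2PI.
    + exists m. split; auto. rewrite D3, Rminus_diag. apply cos_0.
  - assert (Harc : in_arc j s).
    { split; [lra|]. intros m Hm Hmj. specialize (D2 m Hm Hmj). unfold e in *. lra. }
    exists s. split; auto.
    rewrite gfun_on_circle by (auto; intros m Hm; apply cos_in_arc_ne_1; auto).
    fold e. rewrite Hroot. apply injective_projections; simpl; ring.
Qed.

Lemma in_arc_not_pole j k s : (j < N)%nat -> (k < N)%nat -> in_arc j s ->
  Cconj (alpha j) * cis s <> Cconj (alpha k).
Proof.
  intros Hj Hk Hs E. apply (cos_in_arc_ne_1 j k s); auto.
  apply (f_equal (Cmult (alpha k))) in E.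
  rewrite mul_conj_cis, Cmod_1_mul_conj in E by auto.
  apply (f_equal fst) in E. exact E.
Qed.

(* Arcs starting at distinct poles are disjoint, as [rel_ang j k + rel_ang k j = 2 PI]. *)
Lemma in_arc_inj j k s t : (j < N)%nat -> (k < N)%nat -> in_arc j s -> in_arc k t ->
  Cconj (alpha j) * cis s = Cconj (alpha k) * cis t -> j = k.
Proof.
  intros Hj Hk [Hs Hsj] [Ht Htk] E. destruct (Nat.eq_dec j k) as [|Hjk]; auto. exfalso.
  apply (f_equal (Cmult (alpha k))) in E.
  rewrite !mul_conj_cis, rel_ang_diag, Rminus_0_r in E by auto.
  specialize (Hsj k Hk ltac:(auto)). specialize (Htk j Hj ltac:(auto)).
  pose proof (rel_ang_add j k Hj Hk Hjk).
  apply cis_inj_cos, cos_eq_1_2PI in E; lra.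
Qed.

Lemma gfun_roots_on_circle : exists beta : nat -> C,
  (forall j, (j < N)%nat -> Cmod (beta j) = 1%R) /\
  (forall i j, (i < N)%nat -> (j < N)%nat -> beta i = beta j -> i = j) /\
  (forall j k, (j < N)%nat -> (k < N)%nat -> beta j <> Cconj (alpha k)) /\
  (forall j, (j < N)%nat -> gfun N lam alpha (beta j) = 0).
Proof.
  destruct (functional_choice (fun j s => (j < N)%nat ->
              in_arc j s /\ gfun N lam alpha (Cconj (alpha j) * cis s) = 0)) as [sf Hsf].
  { intros j. destruct (Compare_dec.lt_dec j N) as [Hj|Hj].
    - destruct (gfun_root_on_arc j Hj) as [s Hs]. exists s. auto.
    - exists 0%R. intros. lia. }
  exists (fun j => Cconj (alpha j) * cis (sf j)).
  repeat split.
  - intros j Hj. rewrite Cmod_mult, Cmod_conj, Cmod_cis, Ha by auto. ring.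
  - intros i j Hi Hj. apply in_arc_inj; auto; apply Hsf; auto.
  - intros j k Hj Hk. apply in_arc_not_pole; auto. apply Hsf; auto.
  - intros j Hj. apply Hsf; auto.
Qed.

End RootsOnCircle.

Lemma cexp_RtoC (x : R) : cexp (RtoC x) = RtoC (exp x).
Proof.
  unfold cexp. simpl. rewrite cos_0, sin_0.
  apply injective_projections; simpl; ring.
Qed.

Theorem lemma8 (n : nat) (f : C -> C) (t : R) (N : nat)
    (lam : nat -> R) (alpha : nat -> C) :
  extremal n f ->
  (0 < t)%R ->
  f (RtoC 0) = RtoC (exp (- t)) ->
  (1 <= N <= n)%nat ->
  (forall j, (j < N)%nat -> (0 < lam j)%R) ->
  (forall j, (j < N)%nat -> Cmod (alpha j) = 1%R) ->
  (forall i j, (i < N)%nat -> (j < N)%nat -> alpha i = alpha j -> i = j) ->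
  (forall z, (Cmod z < 1)%R -> f z = cexp (gfun N lam alpha z)) ->
  exists beta : nat -> C,
    (forall j, (j < N)%nat -> Cmod (beta j) = 1%R) /\
    (forall i j, (i < N)%nat -> (j < N)%nat -> beta i = beta j -> i = j) /\
    (forall j k, (j < N)%nat -> (k < N)%nat -> beta j <> Cconj (alpha k)) /\
    (forall z, (forall k, (k < N)%nat -> z <> Cconj (alpha k)) ->
       (gfun N lam alpha z = RtoC 0 <-> exists j, (j < N)%nat /\ z = beta j)) /\
    (forall z, (forall k, (k < N)%nat -> z <> Cconj (alpha k)) ->
       gfun N lam alpha z =
         RtoC t * cprod (fun j => z - beta j) N
                / cprod (fun j => z - Cconj (alpha j)) N).
Proof.
  intros _ Ht Hf0 _ Hlam Ha Hinj Hf.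
  assert (Hsum : csum (fun j => RtoC (lam j)) N = RtoC t).
  { rewrite csum_RtoC. f_equal.
    specialize (Hf 0 ltac:(rewrite Cmod_0; lra)).
    rewrite Hf0, gfun_0, csum_RtoC, <- RtoC_opp, cexp_RtoC in Hf.
    apply RtoC_inj, exp_inv in Hf. lra. }
  destruct (gfun_roots_on_circle N lam alpha Hlam Ha Hinj) as [beta [Hb1 [Hb2 [Hb3 Hb4]]]].
  pose proof (gfun_factor N lam alpha beta Ha Hb2 Hb3 Hb4) as Hfac. rewrite Hsum in Hfac.
  assert (Hden : forall z, (forall k, (k < N)%nat -> z <> Cconj (alpha k)) ->
                 cprod (fun j => z - Cconj (alpha j)) N <> 0).
  { intros z Hz E. apply cprod_eq0 in E as [k [Hk E]]. apply (Hz k Hk), Cminus_eq0, E. }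
  assert (Ht0 : RtoC t <> 0) by (intros E; apply RtoC_inj in E; lra).
  exists beta. split; [|split; [|split; [|split]]]; auto.
  - intros z Hz. split.
    + intros E. specialize (Hfac z Hz). rewrite E, Cmult_0_l in Hfac.
      destruct (Cmult_integral _ _ (eq_sym Hfac)) as [|E']; [contradiction|].
      apply cprod_eq0 in E' as [j [Hj E']]. exists j. split; auto. apply Cminus_eq0, E'.
    + intros [j [Hj ->]]. auto.
  - intros z Hz. rewrite <- (Hfac z Hz). field. auto.
Qed.
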